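(* Let $p$ be a prime, $k\ge2$, $\varphi\in\mathbb{Z}[x]$ monic and irreducible modulo $p$, $e\ge1$ an integer, $f\in\mathbb{Z}[x]$ with $f\equiv\varphi^e+p\,l\bmod p^k$ for some $l\in\mathbb{Z}[x]$, and $a$ a positive integer with $a\le e/2$. Let $E(y)=f(x)\left(\varphi^{a(k-1)}+\varphi^{a(k-2)}(py)+\cdots+\varphi^a(py)^{k-2}+(py)^{k-1}\right)$ and $R=\mathbb{Z}[x]/\langle p^k,\varphi^{ak}\rangle$. Suppose $y=y_0+py_1+p^2y_2+\cdots+p^{k-1}y_{k-1}\in R$ is a root of $E$ in $R$, where $y_0,\dots,y_{k-1}\in\mathbb{Z}[x]$. Then for every $z\in R$, the element $y_0+py_1+\cdots+p^{k-3}y_{k-3}+p^{k-2}z$ is also a root of $E$ in $R$.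
   Context: A root of $E$ in $R$ is an element $y\in R$ with $E(y)=0$ in $R$, i.e.\ $E(y)\equiv0\bmod\langle p^k,\varphi^{ak}\rangle$. For $k=2$ the sum $y_0+\cdots+p^{k-3}y_{k-3}$ is empty. *)

From HB Require Import structures.
From mathcomp Require Import all_boot all_order all_algebra.
Set Implicit Arguments. Unset Strict Implicit. Unset Printing Implicit Defensive.
Import Order.TTheory GRing.Theory Num.Theory.
Local Open Scope ring_scope.

Definition poly_mod_p (p : nat) (g : {poly int}) : {poly 'F_p} :=
  map_poly (fun c : int => c%:~R) g.

(* g lies in the ideal <p^k, phi^n> of Z[x], i.e. g = 0 in Z[x]/<p^k, phi^n>. *)
Definition in_ideal2 (p k : nat) (phi : {poly int}) (n : nat) (g : {poly int}) : Prop :=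
  exists u v : {poly int}, g = (p ^ k)%:R * u + phi ^+ n * v.

Definition Epoly (p k a : nat) (phi f y : {poly int}) : {poly int} :=
  f * \sum_(i < k) phi ^+ (a * (k - 1 - i)) * (p%:R * y) ^+ i.

Definition is_root_R (p k a : nat) (phi f y : {poly int}) : Prop :=
  in_ideal2 p k phi (a * k) (Epoly p k a phi f y).

From HB Require Import structures.
From mathcomp Require Import all_boot all_order all_algebra.
From mathcomp Require Import ring zify.
Import Order.TTheory GRing.Theory Num.Theory.
Local Open Scope ring_scope.

(* The new element is y' = y + p^(k-2) d with d = z - y_(k-2) - p y_(k-1), and
   E(y') - E(y) = f * sum_i phi^(a(k-1-i)) ((py')^i - (py)^i), where
   (py')^i - (py)^i = p^i (y' - y) s_i = p^(i+k-2) d s_i.  For i >= 2 this is divisible by p^k;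
   the single term i = 1 is p^(k-1) phi^(a(k-2)) f d, which lies in <p^k, phi^(ak)> because
   f = phi^e mod p and e >= 2a. *)

Section IdealMembership.
Variables (p k : nat) (phi : {poly int}) (n : nat).
Local Notation I := (in_ideal2 p k phi n).

Lemma in_ideal20 : I 0.
Proof. by exists 0, 0; rewrite !mulr0 addr0. Qed.

Lemma in_ideal2D x y : I x -> I y -> I (x + y).
Proof. by move=> [u [v ->]] [u' [v' ->]]; exists (u + u'), (v + v'); ring. Qed.

Lemma in_ideal2Ml c x : I x -> I (c * x).
Proof. by move=> [u [v ->]]; exists (c * u), (c * v); ring. Qed.

Lemma in_ideal2_sum m (F : 'I_m -> {poly int}) :
  (forall i, I (F i)) -> I (\sum_(i < m) F i).
Proof. by move=> IF; apply: (big_ind I); [exact: in_ideal20 | exact: in_ideal2D |]. Qed.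

Lemma in_ideal2_pX j u : (k <= j)%N -> I (p%:R ^+ j * u).
Proof.
move=> le_kj; exists (p%:R ^+ (j - k) * u), 0.
by rewrite mulr0 addr0 natrX mulrA -exprD subnKC.
Qed.

Lemma in_ideal2_phiX j v : (n <= j)%N -> I (phi ^+ j * v).
Proof.
move=> le_nj; exists 0, (phi ^+ (j - n) * v).
by rewrite mulr0 add0r mulrA -exprD subnKC.
Qed.

End IdealMembership.

Lemma subrX_mull (R : comPzRingType) (c u v : R) i :
  (c * u) ^+ i - (c * v) ^+ i = c ^+ i * (u - v) * \sum_(j < i) u ^+ (i.-1 - j) * v ^+ j.
Proof. by rewrite !exprMn -mulrBr subrXX mulrA. Qed.

Lemma sum_natX_split2 (R : pzSemiRingType) (p k : nat) (x : nat -> R) : (2 <= k)%N ->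
  \sum_(i < k) (p ^ i)%:R * x i =
  \sum_(i < k - 2) (p ^ i)%:R * x i + (p ^ (k - 2))%:R * (x (k - 2)%N + p%:R * x k.-1).
Proof.
case: k => [|[|m]] //= _; rewrite subn2 /= !big_ord_recr /= -addrA.
by rewrite mulrDr mulrA -natrM -expnSr.
Qed.

Section RootShift.
Variables (p k a e : nat) (phi f l g : {poly int}).
Hypotheses (k_ge2 : (2 <= k)%N) (a2_le_e : (a * 2 <= e)%N).
Hypothesis f_def : f = phi ^+ e + p%:R * l + (p ^ k)%:R * g.
Local Notation P := (p%:R : {poly int}).
Local Notation I := (in_ideal2 p k phi (a * k)).

Lemma in_ideal2_linear_term : I (P ^+ k.-1 * phi ^+ (a * (k - 2)) * f).
Proof.
rewrite f_def natrX !mulrDr; apply: in_ideal2D; first apply: in_ideal2D.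
- have -> : P ^+ k.-1 * phi ^+ (a * (k - 2)) * phi ^+ e =
            phi ^+ (a * (k - 2) + e) * P ^+ k.-1 by rewrite exprD; ring.
  by apply: in_ideal2_phiX; nia.
- have -> : P ^+ k.-1 * phi ^+ (a * (k - 2)) * (P * l) =
            P ^+ (k.-1 + 1) * (phi ^+ (a * (k - 2)) * l) by rewrite exprD; ring.
  by apply: in_ideal2_pX; lia.
- have -> : P ^+ k.-1 * phi ^+ (a * (k - 2)) * (P ^+ k * g) =
            P ^+ (k + k.-1) * (phi ^+ (a * (k - 2)) * g) by rewrite exprD; ring.
  by apply: in_ideal2_pX; lia.
Qed.

Lemma in_ideal2_Epoly_term y d i :
  I (f * (phi ^+ (a * (k - 1 - i)) *
          ((P * (y + P ^+ (k - 2) * d)) ^+ i - (P * y) ^+ i))).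
Proof.
rewrite subrX_mull addrAC subrr add0r.
case: i => [|[|i]].
- by rewrite big_ord0 !mulr0; exact: in_ideal20.
- have -> : (k - 1 - 1 = k - 2)%N by lia.
  have Pk1 : P ^+ k.-1 = P * P ^+ (k - 2) by rewrite -exprS; congr (_ ^+ _); lia.
  have -> : f * (phi ^+ (a * (k - 2)) * (P ^+ 1 * (P ^+ (k - 2) * d) *
              \sum_(j < 1) (y + P ^+ (k - 2) * d) ^+ (0 - j) * y ^+ j)) =
            d * (P ^+ k.-1 * phi ^+ (a * (k - 2)) * f).
    by rewrite big_ord1 subn0 !expr0 mulr1 Pk1; ring.
  exact/in_ideal2Ml/in_ideal2_linear_term.
- set s := \sum_(j < i.+2) _.
  have -> : f * (phi ^+ (a * (k - 1 - i.+2)) * (P ^+ i.+2 * (P ^+ (k - 2) * d) * s)) =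
            P ^+ (i.+2 + (k - 2)) * (f * phi ^+ (a * (k - 1 - i.+2)) * d * s).
    by rewrite exprD; ring.
  by apply: in_ideal2_pX; lia.
Qed.

Lemma in_ideal2_Epoly_shift y d :
  I (Epoly p k a phi f (y + (p ^ (k - 2))%:R * d) - Epoly p k a phi f y).
Proof.
rewrite /Epoly -mulrBr -sumrB mulr_sumr natrX; apply: in_ideal2_sum => i.
by rewrite -mulrBr; exact: in_ideal2_Epoly_term.
Qed.

Lemma is_root_R_shift y d :
  is_root_R p k a phi f y -> is_root_R p k a phi f (y + (p ^ (k - 2))%:R * d).
Proof.
rewrite /is_root_R => Ey.
rewrite -(subrK (Epoly p k a phi f y) (Epoly p k a phi f _)).
exact: in_ideal2D (in_ideal2_Epoly_shift y d) Ey.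
Qed.

End RootShift.

Theorem lemma9 (p k e a : nat) (phi f : {poly int}) (ys : nat -> {poly int}) :
  prime p -> (2 <= k)%N ->
  phi \is monic -> irreducible_poly (poly_mod_p p phi) ->
  (1 <= e)%N ->
  (exists l g : {poly int}, f = phi ^+ e + p%:R * l + (p ^ k)%:R * g) ->
  (0 < a)%N -> (a * 2 <= e)%N ->
  is_root_R p k a phi f (\sum_(i < k) (p ^ i)%:R * ys i) ->
  forall z : {poly int},
    is_root_R p k a phi f
      (\sum_(i < k - 2) (p ^ i)%:R * ys i + (p ^ (k - 2))%:R * z).
Proof.
move=> _ k_ge2 _ _ _ [l [g f_def]] _ a2_le_e y_root z.
rewrite sum_natX_split2 // in y_root.
set y0 := \sum_(i < k - 2) _ in y_root *.
set w := ys (k - 2)%N + _ in y_root.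
have -> : y0 + (p ^ (k - 2))%:R * z = y0 + (p ^ (k - 2))%:R * w + (p ^ (k - 2))%:R * (z - w).
  by ring.
exact: is_root_R_shift k_ge2 a2_le_e f_def _ _ y_root.
Qed.
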